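(* Let $V=\{1,\dots,n\}$ and let $H=(V,E)$ with $E=\{e\subseteq V : 2\le|e|\le 3\}$. The toric ideal $I_H$ is generated by polynomials of degree $2$ and $3$ (quadrics and cubics). In particular, for $H'=(V,E')$ with $E'=\{e\subseteq V : |e|\ge 2\}$, the toric ideal $I_{H'}$ — which is the ideal of the image of the first tangential variety $\mathrm{Tan}((\mathbb P^1)^n)$ in higher cumulant coordinates — is generated in degrees $2$ and $3$.
   Context: For a hypergraph $H=(V,E)$ (edges are nonempty subsets of $V=\{1,\dots,n\}$, no repeated edges) and a field $K$, the toric ideal $I_H$ is the kernel of the $K$-algebra homomorphism $K[t_e : e\in E]\to K[x_1,\dots,x_n]$, $t_e\mapsto\prod_{j\in e}x_j$. By a result of Sturmfels and Zwiernik, the set of polynomials vanishing on the image of $\mathrm{Tan}((\mathbb P^1)^n)$ in higher cumulants is exactly $I_{H'}$ for the hypergraph $H'$ whose edges are all subsets of $V$ of size at least $2$. *)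

From HB Require Import structures.
From mathcomp Require Import all_boot all_algebra.
From mathcomp Require Import mpoly.
Set Implicit Arguments. Unset Strict Implicit. Unset Printing Implicit Defensive.
Import GRing.Theory.
Local Open Scope ring_scope.

(* A hypergraph on V = 'I_n (i.e. {1..n} relabelled as {0..n-1}) is given by
   its edge set E : {set {set 'I_n}} (edges are subsets, automatically without
   repetition).  The variables t_e of K[t_e : e in E] are indexed by
   'I_#|E| through the enumeration  enum_val : 'I_#|E| -> {set 'I_n}. *)

Definition edge_of (n : nat) (E : {set {set 'I_n}}) (i : 'I_#|E|) : {set 'I_n} :=
  enum_val i.

Definition toric_images (K : fieldType) (n : nat) (E : {set {set 'I_n}})
  : #|E|.-tuple {mpoly K[n]} :=
  [tuple \prod_(j in edge_of i) 'X_j | i < #|E|].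

Definition toric_ideal (K : fieldType) (n : nat) (E : {set {set 'I_n}})
  (p : {mpoly K[#|E|]}) : Prop :=
  comp_mpoly (toric_images K E) p = 0.

Definition in_ideal_gen (R : comRingType) (G : seq R) (p : R) : Prop :=
  exists c : 'I_(size G) -> R, p = \sum_(i < size G) c i * G`_i.

Definition total_degree (k : nat) (R : ringType) (p : {mpoly R[k]}) : nat :=
  (msize p).-1.

Definition generated_in_degrees_2_3 (K : fieldType) (k : nat)
  (I : {mpoly K[k]} -> Prop) : Prop :=
  exists G : seq {mpoly K[k]},
    (forall g, g \in G -> g != 0 /\ (total_degree g = 2%N \/ total_degree g = 3%N)) /\
    (forall p, I p <-> in_ideal_gen G p).

Definition edges_2_3 (n : nat) : {set {set 'I_n}} :=
  [set e : {set 'I_n} | (2 <= #|e| <= 3)%N].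

Definition edges_ge2 (n : nat) : {set {set 'I_n}} :=
  [set e : {set 'I_n} | (2 <= #|e|)%N].

From HB Require Import structures.
From mathcomp Require Import all_boot all_algebra.
From mathcomp Require Import mpoly.
From mathcomp Require Import zify ring.
Set Implicit Arguments. Unset Strict Implicit. Unset Printing Implicit Defensive.

(* A monomial of K[t_e] is a multiset l of edges (a list up to permutation),
   and it is sent to the monomial of K[x] whose exponent at the vertex v is
   the number of members of l containing v.  The toric ideal is therefore
   spanned by the binomials t^l1 - t^l2 with equal vertex degrees, and it
   suffices to connect l1 and l2 by moves exchanging at most three edges for
   at most three edges with the same vertex degrees.  Edges with four or more
   vertices are first split into pairs and one edge of size 2 or 3.  For lists
   of 2- and 3-edges, let c be a vertex of maximal degree and a one of maximal
   degree among the others: a single move on each side creates the edge {c, a},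
   which is cancelled, and induction on the total size concludes. *)

Lemma mem_rem_neq (T : eqType) (x y : T) (s : seq T) :
  x != y -> x \in s -> x \in rem y s.
Proof.
move=> neq_xy xs; have [ys|/rem_id-> //] := boolP (y \in s).
by move: xs; rewrite (perm_mem (perm_to_rem ys)) inE (negbTE neq_xy).
Qed.

Section VertexDegrees.
Variable V : finType.
Implicit Types (e A B : {set V}) (l : seq {set V}) (x y v : V).

Lemma nat_in_setU1 x A v : x \notin A -> ((v \in x |: A) : nat) = (v == x) + (v \in A).
Proof. by move=> xA; rewrite in_setU1; case: eqP => [->|] //=; rewrite (negbTE xA). Qed.

Lemma nat_in_setD1 x A v : x \in A -> ((v \in A) : nat) = (v == x) + (v \in A :\ x).
Proof. by move=> xA; rewrite in_setD1; case: eqP => [->|] //=; rewrite xA. Qed.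

Lemma nat_in_set2 x y v : x != y -> ((v \in [set x; y]) : nat) = (v == x) + (v == y).
Proof. by move=> neq_xy; rewrite in_set2; case: eqP => [->|] //=; rewrite (negbTE neq_xy). Qed.

Lemma nat_in_setU_disjoint A B v :
  [disjoint A & B] -> ((v \in A :|: B) : nat) = (v \in A) + (v \in B).
Proof.
move=> /disjoint_setI0 AB0; have : v \notin A :&: B by rewrite AB0 in_set0.
by rewrite in_setU in_setI; case: (v \in A); case: (v \in B).
Qed.

Lemma cardsD1_ge x A : #|A|.-1 <= #|A :\ x|.
Proof. by rewrite (cardsD1 x A); case: (x \in A); rewrite ?add0n ?add1n ?leq_pred. Qed.

Definition vdeg l v := count (fun e => v \in e) l.
Definition small l := all (fun e => 2 <= #|e| <= 3) l.
Definition weight l := sumn [seq #|e| | e <- l].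

Lemma vdeg_cat l1 l2 v : vdeg (l1 ++ l2) v = vdeg l1 v + vdeg l2 v.
Proof. exact: count_cat. Qed.

Lemma vdeg_perm l1 l2 : perm_eq l1 l2 -> vdeg l1 =1 vdeg l2.
Proof. by move=> /permP pl v; rewrite /vdeg pl. Qed.

Lemma sum_vdeg l : \sum_v vdeg l v = weight l.
Proof.
elim: l => [|e l IHl] /=; first by rewrite big1.
rewrite big_split /= IHl; congr (_ + _).
by rewrite -sum1_card [RHS]big_mkcond; apply: eq_bigr => v _; case: (v \in e).
Qed.

Lemma weight_vdeg l1 l2 : vdeg l1 =1 vdeg l2 -> weight l1 = weight l2.
Proof. by move=> d12; rewrite -!sum_vdeg; apply: eq_bigr => v _; rewrite d12. Qed.

Lemma small_weight l : small l -> 2 * size l <= weight l <= 3 * size l.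
Proof. by elim: l => [|e l IHl] //= /andP[/andP[e2 e3] /IHl]; rewrite /weight /=; lia. Qed.

Lemma all_mem_vdeg_le l x y :
  all (fun e => x \in e) l -> vdeg l x <= vdeg l y -> all (fun e => y \in e) l.
Proof. by rewrite !all_count => /eqP dx le_xy; rewrite eqn_leq count_size -dx. Qed.

Lemma exists_top_pair l : small l -> l != [::] ->
  exists c a, [/\ c != a, forall v, vdeg l v <= vdeg l c,
                  forall v, v != c -> vdeg l v <= vdeg l a & 0 < vdeg l a].
Proof.
case: l => [//|e l] /andP[/andP[e2 _] _] _.
have /card_gt0P [v0 _] : 0 < #|e| by lia.
have [c _ c_max] := @arg_maxnP _ v0 xpredT (vdeg (e :: l)) isT.
have /card_gt0P [i ie] : 0 < #|e :\ c| by move: e2; rewrite (cardsD1 c e); lia.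
move: ie; rewrite in_setD1 => /andP[ic ie].
have [a ac a_max] := @arg_maxnP _ i (fun v => v != c) (vdeg (e :: l)) ic.
exists c, a; split.
- by rewrite eq_sym.
- by move=> v; apply: c_max.
- exact: a_max.
- by apply: leq_trans (a_max i ic); rewrite /vdeg /= ie.
Qed.

Lemma vdeg_inj_le1 l1 l2 : set0 \notin l1 -> set0 \notin l2 ->
  size l1 <= 1 -> size l2 <= 1 -> vdeg l1 =1 vdeg l2 -> l1 = l2.
Proof.
have vdeg1 e v : vdeg [:: e] v = (v \in e) by rewrite /vdeg /= addn0.
have nonempty e : set0 \notin [:: e] -> exists v, v \in e.
  by rewrite inE eq_sym => /set0Pn.
case: l1 => [|e1 [|? ?]] //; case: l2 => [|e2 [|? ?]] // n1 n2 _ _ d12.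
- by have [v ve] := nonempty _ n2; move: (d12 v); rewrite vdeg1 ve.
- by have [v ve] := nonempty _ n1; move: (d12 v); rewrite vdeg1 ve.
- congr [:: _]; apply/setP => v.
  by move: (d12 v); rewrite !vdeg1; case: (v \in e1); case: (v \in e2).
Qed.

End VertexDegrees.

Definition admissible (V : finType) (E : {set {set V}}) := [/\
  forall e, e \in E -> 2 <= #|e|,
  forall e : {set V}, 2 <= #|e| <= 3 -> e \in E &
  forall e x y, e \in E -> 4 <= #|e| -> x \in e -> y \in e :\ x -> e :\ x :\ y \in E].

Section Moves.
(* [R l1 l2] stands for "the binomial t^l1 - t^l2 lies in the ideal generated
   by the binomials of degree at most 3"; only its closure properties matter. *)
Variables (V : finType) (E : {set {set V}}) (R : seq {set V} -> seq {set V} -> Prop).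
Implicit Types (e f g h P : {set V}) (l s r rest : seq {set V}) (x u v c a : V).

Hypothesis E_adm : admissible E.

Hypothesis R_sym : forall {l1 l2}, R l1 l2 -> R l2 l1.
Hypothesis R_trans : forall {l1 l2 l3}, R l1 l2 -> R l2 l3 -> R l1 l3.
Hypothesis R_perm : forall {l1 l2}, perm_eq l1 l2 -> R l1 l2.
Hypothesis R_catl : forall l {l1 l2}, R l1 l2 -> R (l ++ l1) (l ++ l2).
Hypothesis R_short : forall {l1 l2}, all (mem E) l1 -> all (mem E) l2 ->
  size l1 <= 3 -> size l2 <= 3 -> vdeg l1 =1 vdeg l2 -> R l1 l2.

Lemma R_cons e l1 l2 : R l1 l2 -> R (e :: l1) (e :: l2).
Proof. exact: (R_catl [:: e]). Qed.

Lemma R_catr l l1 l2 : R l1 l2 -> R (l1 ++ l) (l2 ++ l).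
Proof.
move=> r12; apply: R_trans (R_perm (permEl (perm_catC l1 l))) _.
exact: R_trans (R_catl l r12) (R_perm (permEl (perm_catC l l2))).
Qed.

Lemma R_cat l1 l2 m1 m2 : R l1 l2 -> R m1 m2 -> R (l1 ++ m1) (l2 ++ m2).
Proof. by move=> r12 rm12; apply: R_trans (R_catr m1 r12) (R_catl l2 rm12). Qed.

Lemma small_all_in_E l : small l -> all (mem E) l.
Proof. by have [_ E23 _] := E_adm; move=> /allP sl; apply/allP => e /sl /E23. Qed.

Lemma R_exchange l s s' rest : perm_eq l (s ++ rest) -> small s -> small s' ->
  size s <= 3 -> size s' <= 3 -> vdeg s =1 vdeg s' -> R l (s' ++ rest).
Proof.
move=> pl ss ss' s3 s'3 ds; apply: R_trans (R_perm pl) (R_catr rest _).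
by apply: R_short; rewrite ?small_all_in_E.
Qed.

Definition splits_off c a l :=
  exists r, [/\ R l ([set c; a] :: r), small r & vdeg ([set c; a] :: r) =1 vdeg l].

Lemma splits_off_exchange c a l s s' rest : perm_eq l (s ++ rest) -> small l ->
  size s <= 3 -> size s' <= 2 -> small ([set c; a] :: s') ->
  vdeg s =1 vdeg ([set c; a] :: s') -> splits_off c a l.
Proof.
move=> pl sl s3 s'2 ss' ds.
have /andP[ss srest] : small s && small rest by rewrite -all_cat -(perm_all _ pl).
exists (s' ++ rest); split.
- by rewrite -cat_cons; apply: R_exchange pl ss ss' s3 _ ds.
- by rewrite /small all_cat; apply/andP; split; [case/andP: ss' | exact: srest].
- by move=> v; rewrite (vdeg_perm pl) -cat_cons !vdeg_cat ds.
Qed.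

(* The maximality of [c] and [a] is used only through [all_mem_vdeg_le]: a
   vertex lying in every member of [l] forces [c], and then [a], to do so. *)
Section TopPair.
Variables (l : seq {set V}) (c a : V).
Hypotheses (small_l : small l) (size_l : 1 < size l) (neq_ca : c != a).
Hypothesis c_max : forall v, vdeg l v <= vdeg l c.
Hypothesis a_max : forall v, v != c -> vdeg l v <= vdeg l a.
Hypothesis a_pos : 0 < vdeg l a.

Lemma splits_off_triple x rest :
  x \notin [set c; a] -> perm_eq l ((x |: [set c; a]) :: rest) -> splits_off c a l.
Proof.
move=> xca pl; move: (xca); rewrite in_set2 negb_or => /andP[xc xa].
have small_rest : small rest by move: small_l; rewrite /small (perm_all _ pl) => /andP[].
have mem_l e : e \in rest -> e \in l by move=> erest; rewrite (perm_mem pl) inE erest orbT.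
have [h hrest hx] : exists2 h, h \in rest & (x \notin h) || (#|h| == 3).
  apply/hasP; apply: contraT => /hasPn rest_x.
  have all_x : all (fun e => x \in e) l.
    rewrite (perm_all _ pl) /= setU11; apply/allP => e /rest_x.
    by rewrite negb_or negbK => /andP[].
  have all_c := all_mem_vdeg_le all_x (c_max x).
  have all_a := all_mem_vdeg_le all_x (a_max xc).
  have /hasP [h0 h0rest _] : has predT rest.
    by rewrite has_predT; move: size_l; rewrite (perm_size pl).
  have : x |: [set c; a] \subset h0.
    by apply/subsetP => v; rewrite in_setU1 in_set2 => /or3P[] /eqP->;
      [move: all_x | move: all_c | move: all_a] => /allP; apply; apply: mem_l.
  move/subset_leq_card; rewrite cardsU1 xca cards2 neq_ca => h0_ge3.
  have /andP[_ h0_le3] := allP small_rest h0 h0rest.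
  by move: (rest_x h0 h0rest); rewrite eqn_leq h0_le3 h0_ge3 orbT.
have pl2 : perm_eq l ([:: x |: [set c; a]; h] ++ rem h rest).
  by rewrite (perm_trans pl) //= perm_cons perm_to_rem.
have /andP[h2 h3] := allP small_rest h hrest.
have df v : ((v \in x |: [set c; a]) : nat) = (v == c) + (v == a) + (v == x).
  by rewrite nat_in_setU1 // nat_in_set2 //; ring.
have [h_eq3 | h_ne3] := eqVneq #|h| 3.
- have /card_gt0P [y] : 0 < #|h :\ x| by apply: leq_trans (cardsD1_ge x h); rewrite h_eq3.
  rewrite in_setD1 => /andP[yx yh]; have xy : x != y by rewrite eq_sym.
  have h_y : #|h :\ y| = 2 by move: h_eq3; rewrite (cardsD1 y h) yh add1n => -[].
  apply: (@splits_off_exchange _ _ _ _ [:: [set x; y]; h :\ y] _ pl2) => //.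
    by rewrite /small /= !cards2 neq_ca xy h_y.
  move=> v; rewrite /vdeg /= df (nat_in_setD1 v yh) (nat_in_set2 v neq_ca) (nat_in_set2 v xy).
  ring.
- have xh : x \notin h by move: hx; rewrite (negbTE h_ne3) orbF.
  have h_eq2 : #|h| = 2 by apply/eqP; rewrite eqn_leq h2 -ltnS ltn_neqAle h_ne3 h3.
  apply: (@splits_off_exchange _ _ _ _ [:: x |: h] _ pl2) => //.
    by rewrite /small /= cards2 neq_ca cardsU1 xh h_eq2.
  by move=> v; rewrite /vdeg /= df (nat_in_setU1 v xh) (nat_in_set2 v neq_ca); ring.
Qed.

Lemma splits_off_common_edge f : f \in l -> c \in f -> a \in f -> splits_off c a l.
Proof.
move=> fl cf af; have pl := perm_to_rem fl.
have /andP[f2 f3] := allP small_l f fl.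
have ca_f : [set c; a] \subset f by apply/subsetP => v; rewrite in_set2 => /orP[] /eqP->.
have [f_eq2 | f_ne2] := eqVneq #|f| 2.
  have ef : [set c; a] = f by apply/eqP; rewrite eqEcard ca_f cards2 neq_ca f_eq2.
  exists (rem f l); rewrite ef; split.
  - exact: R_perm pl.
  - by move: small_l; rewrite /small (perm_all _ pl) => /andP[].
  - by move=> v; rewrite (vdeg_perm pl).
have [x xf xca] : exists2 x, x \in f & x \notin [set c; a].
  apply/subsetPn; apply: contra f_ne2 => /subset_leq_card.
  by rewrite cards2 neq_ca => f_le2; rewrite eqn_leq f_le2.
have ef : f = x |: [set c; a].
  apply/eqP; rewrite eq_sym eqEcard subUset sub1set xf ca_f cardsU1 xca cards2 neq_ca.
  exact: f3.
by apply: (splits_off_triple xca (rest := rem f l)); rewrite -ef.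
Qed.

Lemma splits_off_overlap f g h rest x P :
  perm_eq l [:: f, g, h & rest] -> x \notin h -> x \in P -> #|P| <= 2 ->
  (forall v, ((v \in f) : nat) + (v \in g) = (v == c) + (v == a) + (v == x) + (v \in P)) ->
  splits_off c a l.
Proof.
move=> pl xh xP P2 dfg.
have /andP[h2 h3] : 2 <= #|h| <= 3.
  by move: small_l; rewrite /small (perm_all _ pl) /= => /and4P[_ _ small_h _].
have cardP : #|P| = #|P :\ x|.+1 by rewrite (cardsD1 x P) xP.
have [u uh uP] : exists2 u, u \in h & u \notin P.
  apply/subsetPn; apply/negP => hP.
  have : h \subset P :\ x.
    apply/subsetP => w wh; rewrite in_setD1 (subsetP hP w wh) andbT.
    by apply: contraNneq xh => <-.
  by move/subset_leq_card; clear -h2 P2 cardP; lia.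
have xhu : x \notin h :\ u by rewrite in_setD1 negb_and xh orbT.
have cardh : #|h| = #|h :\ u|.+1 by rewrite (cardsD1 u h) uh.
apply: (@splits_off_exchange _ _ _ [:: f; g; h] [:: u |: P; x |: (h :\ u)] rest pl) => //.
  by rewrite /small /= cards2 neq_ca !cardsU1 uP xhu; clear -h2 h3 P2 cardP cardh; lia.
move=> v; rewrite /vdeg /= !addn0 addnA dfg (nat_in_setU1 v uP) (nat_in_setU1 v xhu).
by rewrite (nat_in_setD1 v uh) (nat_in_set2 v neq_ca); ring.
Qed.

Lemma splits_off_apart f g rest :
  perm_eq l [:: f, g & rest] -> c \in f -> a \in g -> c \notin g -> splits_off c a l.
Proof.
move=> pl cf ag cg.
have fl : f \in l by rewrite (perm_mem pl) mem_head.
have gl : g \in l by rewrite (perm_mem pl) !inE eqxx orbT.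
have /andP[f2 f3] := allP small_l f fl; have /andP[g2 g3] := allP small_l g gl.
set F := f :\ c; set G := g :\ a.
have cardF : #|f| = #|F|.+1 by rewrite (cardsD1 c f) cf.
have cardG : #|g| = #|G|.+1 by rewrite (cardsD1 a g) ag.
have dfg v : ((v \in f) : nat) + (v \in g) = (v == c) + (v == a) + ((v \in F) + (v \in G)).
  by rewrite (nat_in_setD1 v cf) (nat_in_setD1 v ag); ring.
have [/andP[/eqP F2 /eqP G2] | not22] := boolP ((#|F| == 2) && (#|G| == 2)).
  apply: (@splits_off_exchange _ _ _ [:: f; g] [:: F; G] rest pl) => //.
    by rewrite /small /= cards2 neq_ca F2 G2.
  by move=> v; rewrite /vdeg /= !addn0 dfg (nat_in_set2 v neq_ca); ring.
have [FG0 | meetFG] := boolP [disjoint F & G].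
  apply: (@splits_off_exchange _ _ _ [:: f; g] [:: F :|: G] rest pl) => //.
    rewrite /small /= cards2 neq_ca cardsU (disjoint_setI0 FG0) cards0 subn0.
    by clear -f2 f3 g2 g3 cardF cardG not22; lia.
  move=> v; rewrite /vdeg /= !addn0 dfg (nat_in_set2 v neq_ca).
  by rewrite (nat_in_setU_disjoint v FG0); ring.
have /set0Pn[x] : F :&: G != set0 by rewrite setI_eq0.
rewrite in_setI => /andP[xF xG].
have xf : x \in f by move: xF; rewrite in_setD1 => /andP[].
have xg : x \in g by move: xG; rewrite in_setD1 => /andP[].
have [P [xP P2 dFG]] : exists P, [/\ x \in P, #|P| <= 2 &
    forall v, ((v \in F) : nat) + (v \in G) = (v == x) + (v \in P)].
  have [/cards1P[z Fz] | F_ne1] := boolP (#|F| == 1).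
    move: (xF); rewrite Fz in_set1 => /eqP xz; subst z.
    exists G; split => // [|v]; first by rewrite -ltnS -cardG.
    by rewrite in_set1.
  have /cards1P[z Gz] : #|G| == 1 by clear -f2 f3 g2 g3 cardF cardG not22 F_ne1; lia.
  move: (xG); rewrite Gz in_set1 => /eqP xz; subst z.
  exists F; split => // [|v]; first by rewrite -ltnS -cardF.
  by rewrite in_set1 addnC.
have [h hrest xh] : exists2 h, h \in rest & x \notin h.
  apply/hasP; apply: contraT => /hasPn rest_x.
  have all_x : all (fun e => x \in e) l.
    by rewrite (perm_all _ pl) /= xf xg; apply/allP => e /rest_x; rewrite negbK.
  by move: cg; rewrite (allP (all_mem_vdeg_le all_x (c_max x)) g gl).
have pl3 : perm_eq l [:: f, g, h & rem h rest].
  by rewrite (perm_trans pl) // !perm_cons perm_to_rem.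
by apply: (splits_off_overlap pl3 xh xP P2) => v; rewrite dfg dFG; ring.
Qed.

Lemma splits_off_top : splits_off c a l.
Proof.
have [/hasP[f fl /andP[cf af]] | no_ca] := boolP (has (fun e => (c \in e) && (a \in e)) l).
  exact: splits_off_common_edge fl cf af.
have [f fl cf] : exists2 f, f \in l & c \in f.
  by apply/hasP; rewrite has_count (leq_trans a_pos (c_max a)).
have [g gl ag] : exists2 g, g \in l & a \in g by apply/hasP; rewrite has_count.
have cg : c \notin g by apply: contra no_ca => cg; apply/hasP; exists g => //; rewrite cg ag.
have gf : g != f by apply: contraNneq cg => ->.
apply: (splits_off_apart (rest := rem g (rem f l))) cf ag cg.
by rewrite (perm_trans (perm_to_rem fl)) // perm_cons perm_to_rem // mem_rem_neq.
Qed.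

End TopPair.

Lemma R_of_small l1 l2 : small l1 -> small l2 -> vdeg l1 =1 vdeg l2 -> R l1 l2.
Proof.
have [N] := ubnP (weight l1); elim: N l1 l2 => // N IH l1 l2 wN s1 s2 d12.
have [/andP[l1_3 l2_3] | long] := boolP ((size l1 <= 3) && (size l2 <= 3)).
  by apply: R_short; rewrite ?small_all_in_E.
have w12 := weight_vdeg d12.
have [sz1 sz2] : 1 < size l1 /\ 1 < size l2.
  by move: (small_weight s1) (small_weight s2); clear -long w12; lia.
have l1_nil : l1 != [::] by case: (l1) sz1.
have [c [a [neq_ca c_max a_max a_pos]]] := exists_top_pair s1 l1_nil.
have [r1 [R1 sr1 dr1]] := splits_off_top s1 sz1 neq_ca c_max a_max a_pos.
have [r2 [R2 sr2 dr2]] : splits_off c a l2.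
  by apply: splits_off_top => // [v|v vc|]; rewrite -?d12; [exact: c_max | exact: a_max |].
have dr12 : vdeg r1 =1 vdeg r2.
  by move=> v; have := dr1 v; rewrite d12 -(dr2 v) /vdeg /= => /addnI.
have wr1 : weight r1 < N.
  have wca : weight ([set c; a] :: r1) = (weight r1).+2 by rewrite /weight /= cards2 neq_ca.
  by move: wN; rewrite -(weight_vdeg dr1) wca ltnS => /ltnW.
apply: R_trans R1 (R_trans _ (R_sym R2)).
exact: R_cons (IH r1 r2 wr1 sr1 sr2 dr12).
Qed.

Lemma chop_edge e : e \in E -> exists s, [/\ small s, vdeg s =1 vdeg [:: e] & R [:: e] s].
Proof.
have [N] := ubnP #|e|; elim: N e => // N IH e eN eE.
have [E2 E23 E_split] := E_adm; have e2 := E2 e eE.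
have [e3 | e4] := leqP #|e| 3.
  by exists [:: e]; split; [rewrite /small /= e2 e3 | by [] | exact: R_perm].
have /card_gt0P [x xe] : 0 < #|e| by apply: leq_trans e2.
have /card_gt0P [y yex] : 0 < #|e :\ x|.
  by move: e4; rewrite (cardsD1 x e) xe add1n => /ltnW/ltnW.
have xy : x != y by move: yex; rewrite in_setD1 eq_sym => /andP[].
have e'E := E_split _ _ _ eE e4 xe yex.
have e'N : #|e :\ x :\ y| < N.
  by move: eN; rewrite (cardsD1 x e) (cardsD1 y (e :\ x)) xe yex !add1n ltnS => /ltnW.
have [s [ss ds Rs]] := IH _ e'N e'E.
have de v : ((v \in e) : nat) = (v == x) + (v == y) + (v \in e :\ x :\ y).
  by rewrite (nat_in_setD1 v xe) (nat_in_setD1 v yex); ring.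
have cxy : #|[set x; y]| = 2 by rewrite cards2 xy.
exists ([set x; y] :: s); split.
- by rewrite /small /= cxy.
- by move=> v; rewrite -cat1s vdeg_cat ds /vdeg /= de (nat_in_set2 v xy); ring.
- apply: (R_trans (l2 := [:: [set x; y]; e :\ x :\ y])); last exact: R_cons.
  apply: R_short => //=; rewrite ?eE ?e'E ?E23 ?cxy //.
  by move=> v; rewrite /vdeg /= de (nat_in_set2 v xy); ring.
Qed.

Lemma chop l : all (mem E) l -> exists s, [/\ small s, vdeg s =1 vdeg l & R l s].
Proof.
elim: l => [_|e l IHl /= /andP[eE lE]]; first by exists [::]; split => //; exact: R_perm.
have [s1 [ss1 ds1 Rs1]] := chop_edge eE.
have [s2 [ss2 ds2 Rs2]] := IHl lE.
exists (s1 ++ s2); split.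
- by rewrite /small all_cat; apply/andP.
- by move=> v; rewrite vdeg_cat ds1 ds2 /vdeg /= addn0.
- exact: R_cat Rs1 Rs2.
Qed.

Lemma R_of_vdeg l1 l2 : all (mem E) l1 -> all (mem E) l2 -> vdeg l1 =1 vdeg l2 -> R l1 l2.
Proof.
move=> lE1 lE2 d12.
have [s1 [ss1 ds1 R1]] := chop lE1; have [s2 [ss2 ds2 R2]] := chop lE2.
apply: R_trans R1 (R_trans (R_of_small ss1 ss2 _) (R_sym R2)).
by move=> v; rewrite ds1 ds2.
Qed.

End Moves.

Import GRing.Theory.
Local Open Scope ring_scope.

Section IdealGen.
Variables (R : comNzRingType) (G : seq R).
Local Notation I := (in_ideal_gen G).

Lemma in_ideal_gen0 : I 0.
Proof. by exists (fun _ => 0); rewrite big1 // => i _; rewrite mul0r. Qed.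

Lemma in_ideal_genD p q : I p -> I q -> I (p + q).
Proof.
move=> [cp ->] [cq ->]; exists (fun i => cp i + cq i).
by rewrite -big_split; apply: eq_bigr => i _; rewrite mulrDl.
Qed.

Lemma in_ideal_genMl r p : I p -> I (r * p).
Proof.
move=> [cp ->]; exists (fun i => r * cp i).
by rewrite mulr_sumr; apply: eq_bigr => i _; rewrite mulrA.
Qed.

Lemma in_ideal_genN p : I p -> I (- p).
Proof. by rewrite -mulN1r; apply: in_ideal_genMl. Qed.

Lemma in_ideal_gen_mem g : g \in G -> I g.
Proof.
move=> gG; have ltgG : (index g G < size G)%N by rewrite index_mem.
exists (fun j => (j == Ordinal ltgG)%:R).
rewrite (bigD1 (Ordinal ltgG)) //= eqxx mul1r nth_index // big1 ?addr0 //.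
by move=> j /negbTE->; rewrite mul0r.
Qed.

Lemma in_ideal_gen_sum (J : Type) (s : seq J) (F : J -> R) :
  (forall j, I (F j)) -> I (\sum_(j <- s) F j).
Proof. by move=> IF; apply: big_ind => //; [apply: in_ideal_gen0 | apply: in_ideal_genD]. Qed.

End IdealGen.

Section MonomialMapKernel.
Variables (R : comNzRingType) (k n : nat).
Variables (L : {linear {mpoly R[k]} -> {mpoly R[n]}}) (f : 'X_{1..k} -> 'X_{1..n}).
Hypothesis L_monomial : forall m, L 'X_[m] = 'X_[f m].

(* Fix a representative [r m] of every fiber of [f]: [p] differs from
   [q = \sum_m p_m X^(r m)] by binomials, and the coefficient of [q] at a
   representative [m0] is the coefficient of [L p] at [f m0], i.e. zero. *)
Lemma monomial_map_kernel (G : seq {mpoly R[k]}) :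
  (forall m1 m2, f m1 = f m2 -> in_ideal_gen G ('X_[m1] - 'X_[m2])) ->
  forall p, L p = 0 -> in_ideal_gen G p.
Proof.
move=> binomial_in p Lp0.
have fiber m : exists m', f m' == f m by exists m.
pose r m := xchoose (fiber m).
have f_r m : f (r m) = f m by apply/eqP; exact: (xchooseP (fiber m)).
have r_eq m m' : (r m == r m') = (f m == f m').
  apply/eqP/eqP => [e | e]; first by rewrite -f_r e f_r.
  by apply: eq_xchoose => m''; rewrite e.
set q := \sum_(m <- msupp p) p@_m *: 'X_[r m].
have q0 : q = 0.
  apply/mpolyP => m0; rewrite mcoeff0 raddf_sum /=.
  under eq_bigr do rewrite mcoeffZ mcoeffX.
  have [r_m0 | r_m0] := eqVneq (r m0) m0.
    rewrite -r_m0; under eq_bigr do rewrite r_eq.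
    transitivity (L p)@_(f m0); last by rewrite Lp0 mcoeff0.
    rewrite [in RHS](mpolyE p) linear_sum raddf_sum; apply: eq_bigr => m _.
    by rewrite linearZ /= L_monomial mcoeffZ mcoeffX.
  rewrite big1 // => m _; case: eqP => [rm | _]; last by rewrite mulr0.
  have rr : r (r m) = r m by apply/eqP; rewrite r_eq f_r.
  by move: r_m0; rewrite -rm rr eqxx.
have -> : p = \sum_(m <- msupp p) p@_m *: ('X_[m] - 'X_[r m]).
  by under eq_bigr do rewrite scalerBr; rewrite sumrB -/q q0 subr0 -mpolyE.
apply: in_ideal_gen_sum => m; rewrite -mul_mpolyC; apply: in_ideal_genMl.
by apply: binomial_in; rewrite f_r.
Qed.

End MonomialMapKernel.

Lemma binomial_total_degree (R : nzRingType) (k : nat) (m1 m2 : 'X_{1..k}) : m1 != m2 ->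
  total_degree ('X_[m1] - 'X_[m2] : {mpoly R[k]}) = maxn (mdeg m1) (mdeg m2).
Proof.
move=> neq_m12; rewrite /total_degree; set b := 'X_[m1] - 'X_[m2].
have le_b : (msize b <= (maxn (mdeg m1) (mdeg m2)).+1)%N.
  by apply: leq_trans (msizeD_le _ _) _; rewrite msizeN !msizeX -maxnSS.
have m1b : (mdeg m1 < msize b)%N.
  apply: msize_mdeg_lt; rewrite mcoeff_msupp mcoeffB !mcoeffX eqxx.
  rewrite (eq_sym m2 m1) (negbTE neq_m12).
  by rewrite subr0 oner_eq0.
have m2b : (mdeg m2 < msize b)%N.
  apply: msize_mdeg_lt; rewrite mcoeff_msupp mcoeffB !mcoeffX eqxx.
  rewrite (negbTE neq_m12).
  by rewrite sub0r oppr_eq0 oner_eq0.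
suff -> : msize b = (maxn (mdeg m1) (mdeg m2)).+1 by [].
by apply/eqP; rewrite eqn_leq le_b gtn_max m1b m2b.
Qed.

Section ToricIdeal.
Variables (K : fieldType) (n : nat) (E : {set {set 'I_n}}).
Hypothesis E_adm : admissible E.
Local Notation k := #|E|.
Local Notation P := {mpoly K[k]}.
Local Notation toric := (comp_mpoly (toric_images K E)).

(* The exponent of the variable [t_e]; junk value [0] when [e] is not an edge. *)
Definition edge_mnm (e : {set 'I_n}) : 'X_{1..k} :=
  if [pick i | edge_of i == e] is Some i then U_(i)%MM else 0%MM.

Definition edge_monomial (l : seq {set 'I_n}) : P := 'X_[\sum_(e <- l) edge_mnm e].

Definition vertex_mnm (l : seq {set 'I_n}) : 'X_{1..n} :=
  \sum_(e <- l) \sum_(j in e) U_(j)%MM.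

Definition edges_of (m : 'X_{1..k}) : seq {set 'I_n} :=
  flatten [seq nseq (m i) (edge_of i) | i <- enum 'I_k].

Lemma edge_mnm_edge_of (i : 'I_k) : edge_mnm (edge_of i) = U_(i)%MM.
Proof.
rewrite /edge_mnm; case: pickP => [j /eqP ji | /(_ i)]; last by rewrite eqxx.
by rewrite (enum_val_inj ji).
Qed.

Lemma edge_ofK e (eE : e \in E) : edge_of (enum_rank_in eE e) = e.
Proof. exact: enum_rankK_in. Qed.

Lemma edge_monomial_cat l1 l2 :
  edge_monomial (l1 ++ l2) = edge_monomial l1 * edge_monomial l2.
Proof. by rewrite /edge_monomial big_cat mpolyXD. Qed.

Lemma edge_monomial_perm l1 l2 : perm_eq l1 l2 -> edge_monomial l1 = edge_monomial l2.
Proof. by move=> pl; rewrite /edge_monomial (perm_big _ pl). Qed.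

Lemma mdeg_edge_monomial l : all (mem E) l -> mdeg (\sum_(e <- l) edge_mnm e) = size l.
Proof.
elim: l => [|e l IHl /= /andP[eE lE]]; first by rewrite big_nil mdeg0.
by rewrite big_cons mdegD IHl // -(edge_ofK eE) edge_mnm_edge_of mdeg1.
Qed.

Lemma vertex_mnmE l v : vertex_mnm l v = vdeg l v.
Proof.
rewrite /vertex_mnm mnm_sumE; elim: l => [|e l IHl]; first by rewrite big_nil.
rewrite big_cons IHl mnm_sumE; congr (_ + _)%N.
under eq_bigr do rewrite mnm1E.
have [ve | ve] := boolP (v \in e).
  by rewrite (bigD1 v) //= eqxx big1 // => j /andP[_ /negbTE->].
by rewrite big1 // => j je; case: eqP je => // ->; rewrite (negbTE ve).
Qed.

Lemma toric_edge_monomial l : all (mem E) l -> toric (edge_monomial l) = 'X_[vertex_mnm l].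
Proof.
elim: l => [_|e l IHl /= /andP[eE lE]].
  by rewrite /edge_monomial /vertex_mnm !big_nil mpolyX0 comp_mpoly1 mpolyX0.
rewrite -cat1s edge_monomial_cat rmorphM /= IHl // /vertex_mnm big_cons mpolyXD.
congr (_ * _); rewrite /edge_monomial big_seq1 -(edge_ofK eE) edge_mnm_edge_of.
rewrite comp_mpolyXU -tnth_nth tnth_mktuple.
by rewrite (big_morph _ (@mpolyXD _ _) (@mpolyX0 _ _)).
Qed.

Lemma edges_of_in_E m : all (mem E) (edges_of m).
Proof. by apply/allP => e /flattenP[s /mapP[i _ ->]] /nseqP[-> _]; apply: enum_valP. Qed.

Lemma edge_monomial_edges_of m : edge_monomial (edges_of m) = 'X_[m].
Proof.
rewrite /edge_monomial; congr 'X_[_]; apply/mnmP => i.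
rewrite mnm_sumE big_flatten /= big_map big_enum /= (bigD1 i) //= [X in (_ + X)%N]big1 => [|j ji].
  rewrite big_nseq edge_mnm_edge_of mnm1E eqxx addn0.
  by elim: (m i) => //= c ->.
by rewrite big_nseq edge_mnm_edge_of mnm1E (negbTE ji); elim: (m j) => //= c ->.
Qed.

Lemma toric_monomial m : toric 'X_[m] = 'X_[vertex_mnm (edges_of m)].
Proof. by rewrite -toric_edge_monomial ?edges_of_in_E ?edge_monomial_edges_of. Qed.

Definition binomial_of (mm : 'X_{1..k < 4} * 'X_{1..k < 4}) : P := 'X_[mm.1] - 'X_[mm.2].

Definition quadric_cubic_binomials : seq P :=
  [seq binomial_of mm | mm <- enum [pred mm |
     (toric (binomial_of mm) == 0) && (total_degree (binomial_of mm) \in [:: 2; 3]%N)]].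

Lemma quadric_cubic_binomialsP g : g \in quadric_cubic_binomials ->
  [/\ toric g = 0, g != 0 & total_degree g = 2%N \/ total_degree g = 3%N].
Proof.
case/mapP => mm; rewrite mem_enum inE => /andP[/eqP tor deg23] ->; split => //.
  apply: contraTneq deg23 => ->; rewrite /total_degree.
  by have /eqP-> : msize (0 : P) == 0%N by rewrite msize_poly_eq0.
by move: deg23; rewrite !inE => /orP[] /eqP->; [left | right].
Qed.

Lemma short_binomial_in_ideal l1 l2 : all (mem E) l1 -> all (mem E) l2 ->
  (size l1 <= 3)%N -> (size l2 <= 3)%N -> vdeg l1 =1 vdeg l2 ->
  in_ideal_gen quadric_cubic_binomials (edge_monomial l1 - edge_monomial l2).
Proof.
move=> lE1 lE2 s1 s2 d12; rewrite /edge_monomial.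
set m1 := (\sum_(e <- l1) edge_mnm e)%MM; set m2 := (\sum_(e <- l2) edge_mnm e)%MM.
have [-> | neq_m12] := eqVneq m1 m2; first by rewrite subrr; apply: in_ideal_gen0.
have deg1 : (mdeg m1 < 4)%N by rewrite mdeg_edge_monomial.
have deg2 : (mdeg m2 < 4)%N by rewrite mdeg_edge_monomial.
apply: in_ideal_gen_mem; apply/mapP; exists (BMultinom deg1, BMultinom deg2) => //.
rewrite mem_enum inE /binomial_of /=; apply/andP; split.
  rewrite raddfB /= -!/(edge_monomial _) !toric_edge_monomial // subr_eq0.
  by apply/eqP; congr 'X_[_]; apply/mnmP => v; rewrite !vertex_mnmE.
rewrite binomial_total_degree // !mdeg_edge_monomial //.
have nonempty l : all (mem E) l -> set0 \notin l.
  case: E_adm => E2 _ _ lE; apply/negP => /(allP lE) /E2; by rewrite cards0.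
have : (1 < maxn (size l1) (size l2))%N.
  rewrite ltnNge geq_max; apply: contra neq_m12 => /andP[l1_1 l2_1].
  by rewrite /m1 /m2 (vdeg_inj_le1 (nonempty _ lE1) (nonempty _ lE2) l1_1 l2_1 d12).
have : (maxn (size l1) (size l2) <= 3)%N by rewrite geq_max s1 s2.
by case: (maxn _ _) => [|[|[|[|?]]]].
Qed.

Lemma binomial_in_ideal l1 l2 : all (mem E) l1 -> all (mem E) l2 -> vdeg l1 =1 vdeg l2 ->
  in_ideal_gen quadric_cubic_binomials (edge_monomial l1 - edge_monomial l2).
Proof.
pose R l1 l2 := in_ideal_gen quadric_cubic_binomials (edge_monomial l1 - edge_monomial l2).
apply: (@R_of_vdeg _ E R E_adm) => [m1 m2 | m1 m2 m3 | m1 m2 | m m1 m2 |]; rewrite /R.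
- by move/in_ideal_genN; rewrite opprB.
- move=> r12 r23; rewrite -[edge_monomial m1](subrK (edge_monomial m2)) -addrA.
  exact: in_ideal_genD.
- by move/edge_monomial_perm->; rewrite subrr; apply: in_ideal_gen0.
- by rewrite !edge_monomial_cat -mulrBr; apply: in_ideal_genMl.
- exact: short_binomial_in_ideal.
Qed.

Theorem toric_ideal_gen_2_3 : generated_in_degrees_2_3 (@toric_ideal K n E).
Proof.
exists quadric_cubic_binomials; split => [g /quadric_cubic_binomialsP[] // | p].
split => [p_ker | [c ->]].
  apply: (monomial_map_kernel toric_monomial) p_ker => m1 m2 f12.
  rewrite -!edge_monomial_edges_of; apply: binomial_in_ideal; rewrite ?edges_of_in_E //.
  by move=> v; rewrite -!vertex_mnmE f12.
rewrite /toric_ideal raddf_sum big1 // => i _.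
have [tor _ _] := quadric_cubic_binomialsP (mem_nth 0 (ltn_ord i)).
by rewrite [LHS](rmorphM toric) /= tor mulr0.
Qed.

End ToricIdeal.

Lemma admissible_edges_2_3 n : admissible (edges_2_3 n).
Proof.
split => [e | e | e x y]; rewrite ?inE //; first by case/andP.
by move=> /andP[_ e3] e4; move: (leq_trans e4 e3).
Qed.

Lemma admissible_edges_ge2 n : admissible (edges_ge2 n).
Proof.
split => [e | e | e x y _ e4 xe yex]; rewrite ?inE //; first by case/andP.
by move: e4; rewrite (cardsD1 x e) (cardsD1 y (e :\ x)) xe yex !add1n !ltnS.
Qed.

Theorem theorem5p6 (K : fieldType) (n : nat) :
  generated_in_degrees_2_3 (@toric_ideal K n (edges_2_3 n)) /\
  generated_in_degrees_2_3 (@toric_ideal K n (edges_ge2 n)).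
Proof.
by split; apply: toric_ideal_gen_2_3; [apply: admissible_edges_2_3 | apply: admissible_edges_ge2].
Qed.
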